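(* Let $f,g:\mathbb{R}\to\mathbb{R}^2$ be continuous injections that are homeomorphisms onto their images, and let $M\subseteq\mathbb{R}$ be closed and nowhere dense. Then $g(\mathbb{R})\cap f(M)$ is meager in the subspace $g(\mathbb{R})$. *)

From Stdlib Require Import Reals.
Open Scope R_scope.

Definition R2 : Type := (R * R)%type.

Definition dist2 (p q : R2) : R :=
  sqrt ((fst p - fst q) ^ 2 + (snd p - snd q) ^ 2).

Definition continuous_R_R2 (f : R -> R2) : Prop :=
  forall x eps, 0 < eps ->
    exists delta, 0 < delta /\
      forall y, Rabs (y - x) < delta -> dist2 (f y) (f x) < eps.

(* f is injective and its inverse f(R) -> R is continuous (w.r.t. the
   subspace topology on f(R)) *)
Definition inverse_continuous_on_image (f : R -> R2) : Prop :=
  forall x eps, 0 < eps ->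
    exists delta, 0 < delta /\
      forall y, dist2 (f y) (f x) < delta -> Rabs (y - x) < eps.

Definition embedding_R_R2 (f : R -> R2) : Prop :=
  continuous_R_R2 f /\
  (forall x y, f x = f y -> x = y) /\
  inverse_continuous_on_image f.

Definition closure_R (A : R -> Prop) (x : R) : Prop :=
  forall eps, 0 < eps -> exists y, A y /\ Rabs (y - x) < eps.

Definition closed_R (A : R -> Prop) : Prop :=
  forall x, closure_R A x -> A x.

Definition nowhere_dense_R (A : R -> Prop) : Prop :=
  ~ (exists x eps, 0 < eps /\
       forall y, Rabs (y - x) < eps -> closure_R A y).

Definition rel_closure (Y A : R2 -> Prop) (p : R2) : Prop :=
  Y p /\ forall eps, 0 < eps -> exists q, Y q /\ A q /\ dist2 q p < eps.

Definition nowhere_dense_in (Y A : R2 -> Prop) : Prop :=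
  ~ (exists p eps, Y p /\ 0 < eps /\
       forall q, Y q -> dist2 q p < eps -> rel_closure Y A q).

Definition meager_in (Y S : R2 -> Prop) : Prop :=
  exists N : nat -> R2 -> Prop,
    (forall n, nowhere_dense_in Y (N n)) /\
    (forall p, S p -> exists n, N n p).

Definition image (f : R -> R2) (A : R -> Prop) (p : R2) : Prop :=
  exists t, A t /\ f t = p.

(* Cover g(R) ∩ f(M) by the sets f(M ∩ [-n, n]).  Each of them is closed in
   R^2, since M ∩ [-n, n] is compact.  If one of them were not nowhere dense
   in the arc g(R), its closure, hence the set itself, would contain a
   subarc g(I) with I an open interval.  Then f^-1 ∘ g is a continuous
   injection of I into M, and by the intermediate value theorem its image
   contains an interval, contradicting that M is nowhere dense. *)

From Stdlib Require Import Reals Ranalysis5 Lra Classical ClassicalEpsilon.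
Open Scope R_scope.

Lemma dist2_fst_le (p q : R2) : Rabs (fst p - fst q) <= dist2 p q.
Proof.
  unfold dist2. rewrite <- sqrt_Rsqr_abs. apply sqrt_le_1_alt.
  unfold Rsqr. pose proof (pow2_ge_0 (snd p - snd q)). nra.
Qed.

Lemma dist2_snd_le (p q : R2) : Rabs (snd p - snd q) <= dist2 p q.
Proof.
  unfold dist2. rewrite <- sqrt_Rsqr_abs. apply sqrt_le_1_alt.
  unfold Rsqr. pose proof (pow2_ge_0 (fst p - fst q)). nra.
Qed.

Lemma R2_eq_of_common_near (p q : R2) :
  (forall eps, 0 < eps -> exists r, dist2 r p < eps /\ dist2 r q < eps) -> p = q.
Proof.
  intros Hnear.
  assert (Hcoord : forall eps, 0 < eps ->
            Rabs (fst p - fst q) < eps /\ Rabs (snd p - snd q) < eps).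
  { intros eps heps. destruct (Hnear (eps / 2)) as [r [Hrp Hrq]]; [lra|].
    pose proof (dist2_fst_le r p). pose proof (dist2_fst_le r q).
    pose proof (dist2_snd_le r p). pose proof (dist2_snd_le r q).
    split.
    - replace (fst p - fst q) with (- (fst r - fst p) + (fst r - fst q)) by ring.
      eapply Rle_lt_trans; [apply Rabs_triang|]. rewrite Rabs_Ropp. lra.
    - replace (snd p - snd q) with (- (snd r - snd p) + (snd r - snd q)) by ring.
      eapply Rle_lt_trans; [apply Rabs_triang|]. rewrite Rabs_Ropp. lra. }
  destruct p as [a b], q as [c d]. simpl in Hcoord.
  f_equal; apply cond_eq; intros eps heps; apply (Hcoord eps heps).
Qed.

(* The adherent point is the supremum of the [x] lying below some member of
   every [A eps]. *)
Lemma bounded_family_adherent (A : R -> R -> Prop) (n : R) :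
  (forall eps m, A eps m -> Rabs m <= n) ->
  (forall eps, 0 < eps -> exists m, A eps m) ->
  (forall e e' m, e <= e' -> A e m -> A e' m) ->
  exists x, forall eta eps, 0 < eta -> 0 < eps ->
    exists m, A eps m /\ Rabs (m - x) < eta.
Proof.
  intros Hbound Hne Hmono.
  set (E := fun x => x <= n /\ forall eps, 0 < eps -> exists m, A eps m /\ x <= m).
  assert (HEn : E (- n)).
  { split.
    - destruct (Hne 1 Rlt_0_1) as [m Hm].
      pose proof (Hbound _ _ Hm). pose proof (Rabs_pos m). lra.
    - intros eps heps. destruct (Hne eps heps) as [m Hm]. exists m. split; auto.
      pose proof (Hbound _ _ Hm) as Hb. unfold Rabs in Hb; destruct Rcase_abs; lra. }
  destruct (completeness E) as [xs [Hub Hlub]].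
  { exists n. intros x [Hx _]. exact Hx. }
  { exists (- n). exact HEn. }
  exists xs. intros eta eps heta heps. apply NNPP. intros Hfar.
  assert (Hout : forall m, A eps m -> eta <= Rabs (m - xs)).
  { intros m Hm. apply Rnot_lt_le. intros Hlt. apply Hfar. exists m; auto. }
  assert (Hx : exists x, E x /\ xs - eta < x).
  { apply NNPP. intros Hx. assert (xs <= xs - eta) by
      (apply Hlub; intros x Ex; apply Rnot_lt_le; intros Hlt; apply Hx; exists x; auto).
    lra. }
  destruct Hx as [x [[_ Ex] Hxs]].
  assert (Hbeyond : forall e, 0 < e -> exists m, A e m /\ xs + eta <= m).
  { intros e he. destruct (Ex (Rmin e eps)) as [m [Hm Hxm]].
    { apply Rmin_glb_lt; auto. }
    pose proof (Hout m (Hmono _ _ _ (Rmin_r e eps) Hm)).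
    exists m. split; [exact (Hmono _ _ _ (Rmin_l e eps) Hm)|].
    unfold Rabs in *; destruct Rcase_abs; lra. }
  assert (E (xs + eta)).
  { split; [|exact Hbeyond].
    destruct (Hbeyond 1 Rlt_0_1) as [m [Hm Hle]].
    pose proof (Hbound _ _ Hm) as Hb. unfold Rabs in Hb; destruct Rcase_abs; lra. }
  pose proof (Hub _ H). lra.
Qed.

Definition closed_R2 (F : R2 -> Prop) : Prop :=
  forall p, (forall eps, 0 < eps -> exists q, F q /\ dist2 q p < eps) -> F p.

Lemma image_closed_bounded_closed (f : R -> R2) (M : R -> Prop) (n : R) :
  continuous_R_R2 f -> closed_R M ->
  closed_R2 (image f (fun m => M m /\ Rabs m <= n)).
Proof.
  intros hf hM p Hp.
  destruct (bounded_family_adherent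
              (fun eps m => (M m /\ Rabs m <= n) /\ dist2 (f m) p < eps) n)
    as [x Hx].
  - intros eps m [[_ Hm] _]. exact Hm.
  - intros eps heps. destruct (Hp eps heps) as [q [[m [Hm <-]] Hq]]. exists m; auto.
  - intros e e' m He [Hm Hd]. split; [exact Hm | lra].
  - assert (HMx : M x /\ Rabs x <= n).
    { assert (Hcl : closure_R (fun m => M m /\ Rabs m <= n) x).
      { intros eps heps. destruct (Hx eps 1 heps Rlt_0_1) as [m [[Hm _] Hmx]].
        exists m; auto. }
      split.
      - apply hM. intros eps heps. destruct (Hcl eps heps) as [m [[Hm _] Hmx]].
        exists m; auto.
      - apply Rnot_lt_le. intros Hgt.
        destruct (Hcl (Rabs x - n)) as [m [[_ Hm] Hmx]]; [lra|].
        pose proof (Rabs_triang_inv x m). rewrite Rabs_minus_sym in Hmx. lra. }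
    exists x. split; [exact HMx|].
    apply R2_eq_of_common_near. intros eps heps.
    destruct (hf x eps heps) as [delta [hdelta Hdelta]].
    destruct (Hx delta eps hdelta heps) as [m [[_ Hmp] Hmx]].
    exists (f m). auto.
Qed.

Lemma open_interval_not_nowhere_dense (M : R -> Prop) (u v : R) :
  u < v -> (forall c, u < c < v -> M c) -> ~ nowhere_dense_R M.
Proof.
  intros Huv HM Hnd. apply Hnd.
  exists ((u + v) / 2), ((v - u) / 2). split; [lra|].
  intros y Hy eps heps. exists y. split.
  - apply HM. apply Rabs_def2 in Hy. lra.
  - rewrite Rminus_diag, Rabs_R0. exact heps.
Qed.

(* Otherwise, by the intermediate value theorem, the values of [h] fill the
   open interval between [h a] and [h b]. *)
Lemma continuous_into_nowhere_dense_endpoints (h : R -> R) (M : R -> Prop) (a b : R) :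
  a < b -> (forall x, a <= x <= b -> continuity_pt h x) ->
  (forall x, a <= x <= b -> M (h x)) -> nowhere_dense_R M -> h a = h b.
Proof.
  intros Hab Hcont HM Hnd.
  assert (Hfill : forall c, Rmin (h a) (h b) < c < Rmax (h a) (h b) -> M c).
  { intros c Hc.
    destruct (Rlt_le_dec (h a) (h b)) as [Hlt | Hge].
    - rewrite Rmin_left, Rmax_right in Hc by lra.
      destruct (IVT_interv (fun x => h x - c) a b) as [z [Hz Hhz]]; simpl; try lra.
      { intros x Hx. apply continuity_pt_minus; [now apply Hcont|].
        now apply continuity_pt_const. }
      replace c with (h z) by lra. now apply HM.
    - rewrite Rmin_right, Rmax_left in Hc by lra.
      destruct (IVT_interv (fun x => c - h x) a b) as [z [Hz Hhz]]; simpl; try lra.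
      { intros x Hx. apply continuity_pt_minus; [now apply continuity_pt_const|].
        now apply Hcont. }
      replace c with (h z) by lra. now apply HM. }
  apply NNPP. intros Hne.
  apply (open_interval_not_nowhere_dense M (Rmin (h a) (h b)) (Rmax (h a) (h b)));
    [|exact Hfill|exact Hnd].
  unfold Rmin, Rmax. destruct Rle_dec; [destruct r|]; lra.
Qed.

Lemma continuity_pt_of_lift (f g : R -> R2) (h : R -> R) (x r : R) :
  inverse_continuous_on_image f -> continuous_R_R2 g -> 0 < r ->
  (forall t, Rabs (t - x) < r -> f (h t) = g t) -> continuity_pt h x.
Proof.
  intros finv gc hr Hlift eps heps.
  destruct (finv (h x) eps heps) as [d1 [hd1 Hd1]].
  destruct (gc x d1 hd1) as [d2 [hd2 Hd2]].
  exists (Rmin d2 r). split; [now apply Rmin_pos|].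
  simpl. unfold R_dist. intros t [_ Ht].
  pose proof (Rmin_l d2 r). pose proof (Rmin_r d2 r).
  apply Hd1. rewrite (Hlift t), (Hlift x) by (rewrite ?Rminus_diag, ?Rabs_R0; lra).
  apply Hd2. lra.
Qed.

Lemma no_arc_in_image (f g : R -> R2) (M : R -> Prop) :
  embedding_R_R2 f -> embedding_R_R2 g -> nowhere_dense_R M ->
  ~ exists s d, 0 < d /\ forall t, Rabs (t - s) < d -> image f M (g t).
Proof.
  intros [_ [_ finv]] [gc [ginj _]] hMn [s [d [hd Hcov]]].
  set (h := fun t => epsilon (inhabits 0) (fun m => M m /\ f m = g t)).
  assert (Hh : forall t, Rabs (t - s) < d -> M (h t) /\ f (h t) = g t).
  { intros t Ht. apply (epsilon_spec (inhabits 0) (fun m => M m /\ f m = g t)).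
    destruct (Hcov t Ht) as [m [Hm Hfm]]. exists m; auto. }
  assert (Hin : forall x, s <= x <= s + d / 2 -> Rabs (x - s) < d).
  { intros x Hx. apply Rabs_def1; lra. }
  assert (Hends : h s = h (s + d / 2)).
  { apply (continuous_into_nowhere_dense_endpoints h M); [lra| |now intros x Hx; apply Hh, Hin|exact hMn].
    intros x Hx. apply (continuity_pt_of_lift f g h x (d / 2) finv gc); [lra|].
    intros t Ht. apply Hh. apply Rabs_def2 in Ht. apply Rabs_def1; lra. }
  assert (Hg : g s = g (s + d / 2)).
  { destruct (Hh s) as [_ Es]; [apply Hin; lra|].
    destruct (Hh (s + d / 2)) as [_ Ed]; [apply Hin; lra|].
    now rewrite <- Es, <- Ed, Hends. }
  apply ginj in Hg. lra.
Qed.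

Lemma closed_in_image_nowhere_dense_in_arc (f g : R -> R2) (M : R -> Prop)
      (F : R2 -> Prop) :
  embedding_R_R2 f -> embedding_R_R2 g -> nowhere_dense_R M ->
  closed_R2 F -> (forall p, F p -> image f M p) ->
  nowhere_dense_in (image g (fun _ => True)) F.
Proof.
  intros hf hg hMn hF HFM [p [eps [[s [_ <-]] [heps Hdense]]]].
  destruct hg as [gc hg'].
  destruct (gc s eps heps) as [d [hd Hd]].
  apply (no_arc_in_image f g M hf (conj gc hg') hMn). exists s, d. split; [exact hd|].
  intros t Ht. apply HFM, hF.
  destruct (Hdense (g t) (ex_intro _ t (conj I eq_refl)) (Hd t Ht)) as [_ Hcl].
  intros e he. destruct (Hcl e he) as [q [_ [Fq Hq]]]. exists q; auto.
Qed.

Theorem mainTheorem7 (f g : R -> R2) (M : R -> Prop)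
  (hf : embedding_R_R2 f) (hg : embedding_R_R2 g)
  (hMc : closed_R M) (hMn : nowhere_dense_R M) :
  meager_in (image g (fun _ => True))
            (fun p => image g (fun _ => True) p /\ image f M p).
Proof.
  exists (fun n => image f (fun m => M m /\ Rabs m <= INR n)).
  split.
  - intros n. apply (closed_in_image_nowhere_dense_in_arc f g M); auto.
    + apply image_closed_bounded_closed; [exact (proj1 hf) | exact hMc].
    + intros p [m [[Hm _] Hfm]]. exists m; auto.
  - intros p [_ [m [Hm Hfm]]].
    destruct (INR_unbounded (Rabs m)) as [n Hn].
    exists n, m. repeat split; auto. lra.
Qed.
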